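(* Let $\mathbb{H}$ be a finite-dimensional complex Hilbert space with $\dim\mathbb{H}\ge2$, let $k,n$ be positive integers, let $\alpha,\beta$ be complex numbers with $|\alpha|^2+|\beta|^2=1$ and $|\beta|\ne1$, and let $|\phi\rangle\in\mathbb{H}$ be a fixed unit vector (independent of the input; known or unknown). For a pure state $\rho_\psi$ on $\mathbb{H}$ let $|\varphi\rangle\propto\alpha|\psi\rangle+\beta|\phi\rangle$. Then: (i) if $0<|\beta|<1$, there is no probabilistic quantum transformation $\mathcal{F}$ from $\mathbb{H}^{\otimes k}$ to $\mathbb{H}^{\otimes n}$ with $\mathcal{F}(\rho_\psi^{\otimes k})=\rho_\varphi^{\otimes n}$ for all pure states $\rho_\psi$ on $\mathbb{H}$; (ii) if $\beta=0$ and $n>k$, there is no probabilistic quantum transformation $\mathcal{F}$ from $\mathbb{H}^{\otimes k}$ to $\mathbb{H}^{\otimes n}$ with $\mathcal{F}(\rho_\psi^{\otimes k})=\rho_\psi^{\otimes n}$ for all pure states $\rho_\psi$; (iii) if $\beta=0$ and $n<k$, there is no unitary $U$ on $\mathbb{H}^{\otimes k}$ with $U\rho_\psi^{\otimes k}U^\dagger=\rho_\psi^{\otimes n}\otimes\rho_0^{\otimes(k-n)}$ for all pure states $\rho_\psi$, where $|0\rangle\in\mathbb{H}$ is a fixed unit vector.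
   Context: For a unit vector $|\psi\rangle$, $\rho_\psi=|\psi\rangle\langle\psi|$; $|\varphi\rangle\propto|\chi\rangle$ means $|\varphi\rangle$ is the normalization of $|\chi\rangle$ up to a global phase. A probabilistic quantum transformation from $\mathbb{H}_1$ to $\mathbb{H}_2$ is a completely positive, trace-non-increasing linear map from operators on $\mathbb{H}_1$ to operators on $\mathbb{H}_2$; $\mathcal{F}(\rho)=\sigma$ for pure states means $\mathcal{F}(\rho)=p\sigma$ for some $p>0$. *)

From HB Require Import structures.
From mathcomp Require Import all_boot all_order all_algebra.
From mathcomp Require Export sesquilinear spectral.
Set Implicit Arguments. Unset Strict Implicit. Unset Printing Implicit Defensive.
Import Order.TTheory GRing.Theory Num.Theory.
Local Open Scope ring_scope.

Section QDefs.
Variable C : numClosedFieldType.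

Definition adjmx m n (A : 'M[C]_(m, n)) : 'M[C]_(n, m) := ((map_mx Num.conj A)^T)%R.

Definition sqnorm n (v : 'cV[C]_n) : C := (adjmx v *m v) 0 0.

Definition unit_vec n (v : 'cV[C]_n) : Prop := sqnorm v = 1.

(* normalization of a vector (the global phase is irrelevant for rho) *)
Definition normalize n (v : 'cV[C]_n) : 'cV[C]_n := (sqrtC (sqnorm v))^-1 *: v.

Definition proj n (v : 'cV[C]_n) : 'M[C]_n := v *m adjmx v.

Definition split_idx m n (i : 'I_(m * n)) : 'I_m * 'I_n :=
  enum_val (cast_ord (esym (mxvec_cast m n)) i).

Definition kron m1 n1 m2 n2 (A : 'M[C]_(m1, n1)) (B : 'M[C]_(m2, n2))
  : 'M[C]_(m1 * m2, n1 * n2) :=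
  \matrix_(i, j) (A (split_idx i).1 (split_idx j).1 * B (split_idx i).2 (split_idx j).2).

Fixpoint tpow d (A : 'M[C]_d) (k : nat) : 'M[C]_(d ^ k) :=
  match k return 'M[C]_(d ^ k) with
  | 0 => 1%:M
  | k'.+1 => castmx (esym (expnS d k'), esym (expnS d k')) (kron A (tpow A k'))
  end.

Definition psd m (A : 'M[C]_m) : Prop :=
  forall v : 'cV[C]_m, 0 <= (adjmx v *m A *m v) 0 0.

(* (id_p (x) F) acting on 'M_(p*m) *)
Definition ampl p m n (F : 'M[C]_m -> 'M[C]_n) (X : 'M[C]_(p * m)) : 'M[C]_(p * n) :=
  \matrix_(i, j)
    (F (\matrix_(x, y) X (mxvec_index (split_idx i).1 x) (mxvec_index (split_idx j).1 y)))
      (split_idx i).2 (split_idx j).2.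

Definition completely_positive m n (F : 'M[C]_m -> 'M[C]_n) : Prop :=
  forall (p : nat) (X : 'M[C]_(p * m)), psd X -> psd (ampl F X).

Definition trace_nonincreasing m n (F : 'M[C]_m -> 'M[C]_n) : Prop :=
  forall X : 'M[C]_m, psd X -> \tr (F X) <= \tr X.

Definition prob_qtrans m n (F : {linear 'M[C]_m -> 'M[C]_n}) : Prop :=
  completely_positive F /\ trace_nonincreasing F.

End QDefs.

Lemma expn_split (d n k : nat) : (n < k)%N -> (d ^ n * d ^ (k - n))%N = (d ^ k)%N.
Proof. by move=> h; rewrite -expnD subnKC // ltnW. Qed.

(* (i) The states psi and -psi have the same density matrix, yet for psi
   orthogonal to phi the prescribed outputs are the pure states
   alpha psi + beta phi and -alpha psi + beta phi, whose overlap
   (2|beta|^2 - 1)^2 is < 1 when 0 < |beta| < 1; no map, linear or not, can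
   send one input to two distinct rays.
   (ii) For psi_t = e_0 + t e_1 with t real, the entries of rho_(psi_t)^(x)k
   are monomials of degree at most 2k in t, so the 2k + 2 matrices at
   t = 0, ..., 2k + 1 are linearly dependent.  A linear F carries this
   dependence, with nonzero rescaled coefficients, to the matrices
   rho_(psi_t)^(x)n, whose entries include every monomial t^e with e <= 2n;
   a Vandermonde determinant then forces all coefficients to vanish when n > k.
   (iii) Unitary conjugation preserves Tr(rho sigma), so
   |<psi|chi>|^(2k) = |<psi|chi>|^(2n) for all unit psi and chi, and two
   unit vectors with overlap 1/2 give k = n. *)

From HB Require Import structures.
From mathcomp Require Import all_boot all_order all_algebra sesquilinear spectral.
From mathcomp Require Import ring zify.
Set Implicit Arguments. Unset Strict Implicit. Unset Printing Implicit Defensive.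
Import Order.TTheory GRing.Theory Num.Theory.
Local Open Scope ring_scope.
Local Open Scope sesquilinear_scope.

Section PureStates.
Variable C : numClosedFieldType.
Implicit Types (m n d k : nat).

(** * Inner products, projections and overlaps *)

Definition dot n (a b : 'cV[C]_n) : C := (adjmx a *m b) 0 0.

Lemma dotE n (a b : 'cV[C]_n) : dot a b = \sum_i (a i 0)^* * b i 0.
Proof. by rewrite /dot !mxE; apply: eq_bigr => i _; rewrite !mxE. Qed.

Lemma sqnormE n (v : 'cV[C]_n) : sqnorm v = dot v v.
Proof. by []. Qed.

Lemma dotDl n (a b c : 'cV[C]_n) : dot (a + b) c = dot a c + dot b c.
Proof.
by rewrite !dotE -big_split; apply: eq_bigr => i _; rewrite mxE rmorphD mulrDl.
Qed.

Lemma dotDr n (a b c : 'cV[C]_n) : dot c (a + b) = dot c a + dot c b.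
Proof. by rewrite !dotE -big_split; apply: eq_bigr => i _; rewrite mxE mulrDr. Qed.

Lemma dotZl n s (a c : 'cV[C]_n) : dot (s *: a) c = s^* * dot a c.
Proof. by rewrite !dotE mulr_sumr; apply: eq_bigr => i _; rewrite mxE rmorphM mulrA. Qed.

Lemma dotZr n s (a c : 'cV[C]_n) : dot c (s *: a) = s * dot c a.
Proof. by rewrite !dotE mulr_sumr; apply: eq_bigr => i _; rewrite mxE mulrCA. Qed.

Lemma dotC n (a b : 'cV[C]_n) : dot b a = (dot a b)^*.
Proof.
rewrite !dotE rmorph_sum; apply: eq_bigr => i _.
by rewrite rmorphM /= conjCK mulrC.
Qed.

Lemma dot_delta n (i j : 'I_n) :
  dot (delta_mx i 0) (delta_mx j 0) = (i == j)%:R.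
Proof.
rewrite dotE (bigD1 i) //= big1 => [|l /negbTE li]; rewrite !mxE.
  by rewrite eqxx conjC1 mul1r addr0 andbT.
by rewrite li conjC0 mul0r.
Qed.

Lemma dot_orthonormal_comb n (x y : 'cV[C]_n) a1 b1 a2 b2 :
  unit_vec x -> unit_vec y -> dot x y = 0 ->
  dot (a1 *: x + b1 *: y) (a2 *: x + b2 *: y) = a1^* * a2 + b1^* * b2.
Proof.
move=> hx hy xy; have yx : dot y x = 0 by rewrite dotC xy conjC0.
rewrite !dotDl !dotDr !dotZl !dotZr -!sqnormE hx hy xy yx.
by rewrite !mulr0 !mulr1 addr0 add0r.
Qed.

Lemma sqnorm_ge0 n (v : 'cV[C]_n) : 0 <= sqnorm v.
Proof. by rewrite sqnormE dotE sumr_ge0 // => i _; rewrite mulrC mul_conjC_ge0. Qed.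

Lemma sqnorm_eq0 n (v : 'cV[C]_n) : (sqnorm v == 0) = (v == 0).
Proof.
apply/idP/eqP => [|->]; last by rewrite sqnormE dotE big1 // => i _; rewrite mxE mulr0.
rewrite sqnormE dotE psumr_eq0 => [/allP v0|i _]; last by rewrite mulrC mul_conjC_ge0.
apply/matrixP => i j; rewrite (ord1 j) mxE.
by have /implyP/(_ isT) := v0 i (mem_index_enum i); rewrite mulrC mul_conjC_eq0 => /eqP.
Qed.

Lemma unit_vec_neq0 n (v : 'cV[C]_n) : unit_vec v -> v != 0.
Proof. by rewrite -sqnorm_eq0 /unit_vec => ->; rewrite oner_eq0. Qed.

Lemma unit_vecN n (v : 'cV[C]_n) : unit_vec (- v) = unit_vec v.
Proof.
by rewrite /unit_vec !sqnormE -scaleN1r dotZl dotZr mulrA -normCKC normrN1 expr1n mul1r.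
Qed.

Lemma unit_vec_normalize n (v : 'cV[C]_n) : v != 0 -> unit_vec (normalize v).
Proof.
rewrite -sqnorm_eq0 => v0; rewrite /unit_vec /normalize sqnormE dotZl dotZr -sqnormE.
rewrite geC0_conj ?invr_ge0 ?sqrtC_ge0 ?sqnorm_ge0 //.
by rewrite mulrA -expr2 exprVn sqrtCK mulVf.
Qed.

Lemma normalize_id n (v : 'cV[C]_n) : unit_vec v -> normalize v = v.
Proof. by rewrite /normalize /unit_vec => ->; rewrite sqrtC1 invr1 scale1r. Qed.

Lemma projE n (v : 'cV[C]_n) i j : proj v i j = v i 0 * (v j 0)^*.
Proof. by rewrite /proj !mxE big_ord1 !mxE. Qed.

Lemma projZ n s (v : 'cV[C]_n) : proj (s *: v) = (s * s^*) *: proj v.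
Proof.
by apply/matrixP => i j; rewrite [LHS]projE [RHS]mxE projE !mxE rmorphM mulrACA.
Qed.

Lemma projN n (v : 'cV[C]_n) : proj (- v) = proj v.
Proof. by apply/matrixP => i j; rewrite !projE !mxE rmorphN mulrNN. Qed.

Definition overlap n (a b : 'cV[C]_n) : C := dot a b * dot b a.

Lemma overlapC n (a b : 'cV[C]_n) : overlap a b = overlap b a.
Proof. exact: mulrC. Qed.

Lemma overlap_ge0 n (a b : 'cV[C]_n) : 0 <= overlap a b.
Proof. by rewrite /overlap [dot b a]dotC mul_conjC_ge0. Qed.

Lemma overlapZ n s (a b : 'cV[C]_n) :
  overlap (s *: a) b = s^* * s * overlap a b.
Proof. by rewrite /overlap dotZl dotZr; ring. Qed.

Lemma overlap_unit n (v : 'cV[C]_n) : unit_vec v -> overlap v v = 1.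
Proof. by rewrite /overlap /unit_vec sqnormE => ->; rewrite mulr1. Qed.

Lemma mxtrace_proj_mul n (a b : 'cV[C]_n) : \tr (proj a *m proj b) = overlap a b.
Proof.
rewrite /proj -!mulmxA mxtrace_mulC /mxtrace big_ord1 !mulmxA.
by rewrite -(mulmxA (adjmx a *m b)) mxE big_ord1.
Qed.

Lemma eq_overlap_proj n (a a' b b' : 'cV[C]_n) :
  proj a = proj a' -> proj b = proj b' -> overlap a b = overlap a' b'.
Proof. by move=> Ea Eb; rewrite -!mxtrace_proj_mul Ea Eb. Qed.

(* Comparing traces against [proj x] and [proj y] gives [q1 = q2 R] and
   [q1 R = q2] for [R = overlap x y], hence [R ^+ 2 = 1]. *)
Lemma overlap_eq1_scaled_proj n (x y : 'cV[C]_n) q1 q2 :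
  unit_vec x -> unit_vec y -> q1 != 0 ->
  q1 *: proj x = q2 *: proj y -> overlap x y = 1.
Proof.
move=> hx hy q10 E.
have T1 := congr1 (fun A => \tr (proj x *m A)) E.
have T2 := congr1 (fun A => \tr (proj y *m A)) E.
move: T1 T2; rewrite /= -!scalemxAr !mxtraceZ !mxtrace_proj_mul.
rewrite !overlap_unit // [overlap y x]overlapC !mulr1 => T1 T2.
have : overlap x y ^+ 2 == 1.
  by rewrite -(inj_eq (mulfI q10)) mulr1 expr2 mulrA T2 -T1.
rewrite sqrf_eq1 => /orP [/eqP //| /eqP R1].
by have := overlap_ge0 x y; rewrite R1 ler0N1.
Qed.

Lemma adjmx_mul m n p (A : 'M[C]_(m, n)) (B : 'M[C]_(n, p)) :
  adjmx (A *m B) = adjmx B *m adjmx A.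
Proof. by rewrite /adjmx map_mxM trmx_mul. Qed.

Lemma adjmxE m n (A : 'M[C]_(m, n)) : adjmx A = A ^t*.
Proof. by rewrite /adjmx map_trmx. Qed.

Lemma proj_mul n (U : 'M[C]_n) (v : 'cV[C]_n) :
  proj (U *m v) = U *m proj v *m adjmx U.
Proof. by rewrite /proj adjmx_mul !mulmxA. Qed.

Lemma dot_unitary n (U : 'M[C]_n) (a b : 'cV[C]_n) :
  U \is unitarymx -> dot (U *m a) (U *m b) = dot a b.
Proof.
by move=> hU; rewrite /dot adjmx_mul (adjmxE U) !mulmxA mulmxKtV.
Qed.

Lemma overlap_unitary n (U : 'M[C]_n) (a b : 'cV[C]_n) :
  U \is unitarymx -> overlap (U *m a) (U *m b) = overlap a b.
Proof. by move=> hU; rewrite /overlap !dot_unitary. Qed.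

Lemma exists_lkernel_vec m r (A : 'M[C]_(m, r)) :
  (r < m)%N -> exists2 u : 'rV[C]_m, u != 0 & u *m A = 0.
Proof.
move=> rm; have : kermx A != 0.
  by rewrite kermx_eq0 /row_free neq_ltn (leq_ltn_trans (rank_leq_col A) rm).
by case/rowV0Pn => u /sub_kermxP uA u0; exists u.
Qed.

Lemma exists_orthogonal_unit_vec d (phi : 'cV[C]_d) :
  (1 < d)%N -> exists2 psi : 'cV[C]_d, unit_vec psi & dot phi psi = 0.
Proof.
move=> hd; have [u u0 uphi] := exists_lkernel_vec (map_mx Num.conj phi) hd.
exists (normalize u^T); first by apply: unit_vec_normalize; rewrite trmx_eq0.
rewrite /normalize dotZr; suff -> : dot phi u^T = 0 by rewrite mulr0.
have := congr1 (fun M : 'M[C]_1 => M 0 0) uphi; rewrite mxE [RHS]mxE => <-.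
by rewrite dotE; apply: eq_bigr => i _; rewrite !mxE mulrC.
Qed.

Lemma exists_half_overlap d : (1 < d)%N ->
  exists psi chi : 'cV[C]_d, [/\ unit_vec psi, unit_vec chi & overlap psi chi = 2^-1].
Proof.
move=> hd; pose i0 : 'I_d := Ordinal (ltnW hd); pose i1 : 'I_d := Ordinal hd.
have i01 : (i0 == i1) = false by [].
have i10 : (i1 == i0) = false by [].
pose e0 : 'cV[C]_d := delta_mx i0 0; pose e1 : 'cV[C]_d := delta_mx i1 0.
have ue0 : unit_vec e0 by rewrite /unit_vec sqnormE dot_delta eqxx.
have s2 : sqnorm (e0 + e1) = 2.
  by rewrite sqnormE !dotDl !dotDr !dot_delta !eqxx i01 i10 addr0 add0r.
have e01 : e0 + e1 != 0 by rewrite -sqnorm_eq0 s2 pnatr_eq0.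
exists e0, (normalize (e0 + e1)); split => //; first exact: unit_vec_normalize.
have c0 : 0 <= (sqrtC (2 : C))^-1 by rewrite invr_ge0 sqrtC_ge0 ler0n.
rewrite overlapC /normalize s2 overlapZ geC0_conj // -expr2 exprVn sqrtCK.
by rewrite /overlap dotDl dotDr !dot_delta eqxx i01 i10 addr0 !mulr1.
Qed.

(** * Tensor powers of vectors *)

Lemma split_mxvec m n (i : 'I_m) (j : 'I_n) : split_idx (mxvec_index i j) = (i, j).
Proof. by rewrite /split_idx /mxvec_index cast_ordK enum_rankK. Qed.

Lemma sum_split_idx m n (F : 'I_m -> 'I_n -> C) :
  \sum_(l < m * n) F (split_idx l).1 (split_idx l).2 = \sum_i \sum_j F i j.
Proof.
rewrite pair_bigA (reindex (fun p : 'I_m * 'I_n => mxvec_index p.1 p.2)) /=.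
  by apply: eq_bigr => -[i j] _; rewrite split_mxvec.
exists (fun l => split_idx l) => [[i j] _ | l _] /=; first by rewrite split_mxvec.
by case/mxvec_indexP: l => i j; rewrite split_mxvec.
Qed.

Lemma kron_colE m n (a : 'cV[C]_m) (b : 'cV[C]_n) i j :
  kron a b i j = a (split_idx i).1 0 * b (split_idx i).2 0.
Proof. by rewrite mxE (ord1 (split_idx j).1) (ord1 (split_idx j).2). Qed.

Lemma proj_kron m n (a : 'cV[C]_m) (b : 'cV[C]_n) :
  kron (proj a) (proj b) = proj (kron a b).
Proof. by apply/matrixP => i j; rewrite projE !kron_colE mxE !projE rmorphM mulrACA. Qed.

Lemma dot_kron m n (a c : 'cV[C]_m) (b e : 'cV[C]_n) :
  dot (kron a b) (kron c e) = dot a c * dot b e.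
Proof.
rewrite !dotE big_distrl /=.
under eq_bigr => l _ do rewrite !kron_colE rmorphM /= mulrACA.
rewrite (sum_split_idx (fun i j => (a i 0)^* * c i 0 * ((b j 0)^* * e j 0))).
by apply: eq_bigr => i _; rewrite big_distrr.
Qed.

Lemma overlap_kron m n (a c : 'cV[C]_m) (b e : 'cV[C]_n) :
  overlap (kron a b) (kron c e) = overlap a c * overlap b e.
Proof. by rewrite /overlap !dot_kron mulrACA. Qed.

Lemma proj_castmx m m' (e : m = m') (v : 'cV[C]_m) :
  proj (castmx (e, erefl 1) v) = castmx (e, e) (proj v).
Proof. by case: m' / e; rewrite !castmx_id. Qed.

Lemma dot_castmx m m' (e : m = m') (a b : 'cV[C]_m) :
  dot (castmx (e, erefl 1) a) (castmx (e, erefl 1) b) = dot a b.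
Proof. by case: m' / e; rewrite !castmx_id. Qed.

Lemma overlap_castmx m m' (e : m = m') (a b : 'cV[C]_m) :
  overlap (castmx (e, erefl 1) a) (castmx (e, erefl 1) b) = overlap a b.
Proof. by rewrite /overlap !dot_castmx. Qed.

Fixpoint vpow d (v : 'cV[C]_d) k : 'cV[C]_(d ^ k) :=
  match k return 'cV[C]_(d ^ k) with
  | 0 => const_mx 1
  | k'.+1 => castmx (esym (expnS d k'), erefl 1) (kron v (vpow v k'))
  end.

Lemma tpow_proj d (v : 'cV[C]_d) k : tpow (proj v) k = proj (vpow v k).
Proof.
elim: k => [|k IH] /=; last by rewrite IH proj_kron proj_castmx.
by apply/matrixP => i j; rewrite projE !mxE !(ord1 i) !(ord1 j) conjC1 mulr1.
Qed.

Lemma dot_vpow d (a b : 'cV[C]_d) k : dot (vpow a k) (vpow b k) = dot a b ^+ k.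
Proof.
elim: k => [|k IH] /=; last by rewrite dot_castmx dot_kron IH exprS.
by rewrite dotE big_ord1 !mxE conjC1 mulr1.
Qed.

Lemma overlap_vpow d (a b : 'cV[C]_d) k :
  overlap (vpow a k) (vpow b k) = overlap a b ^+ k.
Proof. by rewrite /overlap !dot_vpow exprMn. Qed.

Lemma unit_vec_vpow d (v : 'cV[C]_d) k : unit_vec v -> unit_vec (vpow v k).
Proof. by rewrite /unit_vec !sqnormE dot_vpow => ->; rewrite expr1n. Qed.

Lemma vpowSE d (v : 'cV[C]_d) k i :
  vpow v k.+1 i 0 =
  v (split_idx (cast_ord (expnS d k) i)).1 0 *
  vpow v k (split_idx (cast_ord (expnS d k) i)).2 0.
Proof.
rewrite /= castmxE kron_colE.
by have -> : cast_ord (esym (esym (expnS d k))) i = cast_ord (expnS d k) i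
  by apply: val_inj.
Qed.

Lemma vpowS_mxvec d (v : 'cV[C]_d) k i j :
  vpow v k.+1 (cast_ord (esym (expnS d k)) (mxvec_index i j)) 0 = v i 0 * vpow v k j 0.
Proof. by rewrite vpowSE cast_ordKV split_mxvec. Qed.

Lemma vpowZ d s (v : 'cV[C]_d) k : vpow (s *: v) k = s ^+ k *: vpow v k.
Proof.
elim: k => [|k IH]; first by rewrite scale1r.
by apply/matrixP => i j; rewrite (ord1 j) mxE !vpowSE IH !mxE exprS mulrACA.
Qed.

Lemma proj_vpow_image d k n (F : {linear 'M[C]_(d ^ k) -> 'M[C]_(d ^ n)}) :
  (forall psi : 'cV[C]_d, unit_vec psi ->
     exists p : C, 0 < p /\ F (tpow (proj psi) k) = p *: tpow (proj psi) n) ->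
  forall v : 'cV[C]_d, v != 0 ->
    exists b : C, b != 0 /\ F (proj (vpow v k)) = b *: proj (vpow v n).
Proof.
move=> H v v0; have [p [p_gt0]] := H _ (unit_vec_normalize v0).
rewrite /normalize !tpow_proj !vpowZ !projZ linearZ /=.
set c := (sqrtC _)^-1; have c0 : c != 0 by rewrite invr_eq0 sqrtC_eq0 sqnorm_eq0.
have mu0 l : c ^+ l * (c ^+ l)^* != 0 by rewrite mulf_neq0 ?conjC_eq0 ?expf_neq0.
move=> E; exists ((c ^+ k * (c ^+ k)^*)^-1 * (p * (c ^+ n * (c ^+ n)^*))); split.
  by rewrite mulf_neq0 ?invr_eq0 ?mu0 // mulf_neq0 ?mu0 // lt0r_neq0.
by rewrite -scalerA -[(p * _) *: _]scalerA -E scalerA mulVf ?scale1r.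
Qed.

(** * Moments and the pencil e_i0 + t e_i1 *)

Definition moment m (c : 'rV[C]_m) e : C := \sum_(j < m) c 0 j * (j : nat)%:R ^+ e.

Lemma exists_moments_eq0 m D : (D.+1 < m)%N ->
  exists2 c : 'rV[C]_m, c != 0 & forall e, (e <= D)%N -> moment c e = 0.
Proof.
move=> Dm; pose A : 'M[C]_(m, D.+1) := \matrix_(j, e) ((j : nat)%:R ^+ e).
have [c c0 cA] := exists_lkernel_vec A Dm.
exists c => // e De; have De' : (e < D.+1)%N by [].
have := congr1 (fun M : 'M[C]_(1, D.+1) => M 0 (Ordinal De')) cA.
by rewrite mxE [RHS]mxE => <-; apply: eq_bigr => j _; rewrite mxE.
Qed.

Lemma moments_eq0 m (c : 'rV[C]_m) :
  (forall e, (e < m)%N -> moment c e = 0) -> c = 0.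
Proof.
move=> hc; pose V := Vandermonde m (\row_(j < m) (j : nat)%:R : 'rV[C]_m).
have Vu : V \in unitmx.
  rewrite unitmxE unitfE det_Vandermonde.
  apply/prodf_neq0 => i _; apply/prodf_neq0 => j ij.
  by rewrite !mxE subr_eq0 eqr_nat eq_sym neq_ltn ij.
have : V *m c^T = 0.
  apply/matrixP => e z; rewrite !mxE -[RHS](hc e (ltn_ord e)).
  by apply: eq_bigr => j _; rewrite /V !mxE (ord1 z) mulrC.
move/(congr1 (mulmx (invmx V))); rewrite mulKmx // mulmx0 => /eqP.
by rewrite trmx_eq0 => /eqP.
Qed.

Section Pencil.
Variables (d : nat) (i0 i1 : 'I_d).
Hypothesis i01 : i0 != i1.

Definition pencil (t : C) : 'cV[C]_d := delta_mx i0 0 + t *: delta_mx i1 0.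

Lemma pencilE t x : pencil t x 0 = (x == i0)%:R + t * (x == i1)%:R.
Proof. by rewrite !mxE !andbT. Qed.

Lemma pencil_neq0 t : pencil t != 0.
Proof.
apply/eqP => /matrixP/(_ i0 0); rewrite pencilE eqxx (negbTE i01) mulr0 addr0 mxE.
by move/eqP; rewrite oner_eq0.
Qed.

Lemma pencil_monomial x :
  exists a (b : bool), (a <= 1)%N /\ forall t, pencil t x 0 = b%:R * t ^+ a.
Proof.
have [-> | x0] := eqVneq x i0.
  exists 0%N, true; split=> // t.
  by rewrite pencilE eqxx (negbTE i01) mulr0 addr0 expr0 mulr1.
have [-> | x1] := eqVneq x i1.
  exists 1%N, true; split=> // t.
  by rewrite pencilE eqxx eq_sym (negbTE i01) add0r mulr1 mul1r expr1.
exists 0%N, false; split=> // t.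
by rewrite pencilE (negbTE x0) (negbTE x1) mulr0 addr0 mul0r.
Qed.

Lemma vpow_pencil_monomial k x :
  exists a (b : bool), (a <= k)%N /\ forall t, vpow (pencil t) k x 0 = b%:R * t ^+ a.
Proof.
elim: k x => [|k IH] x; first by exists 0%N, true; split=> // t; rewrite mxE mulr1.
set ij := split_idx (cast_ord (expnS d k) x).
have [a1 [b1 [a1_le E1]]] := pencil_monomial ij.1.
have [a2 [b2 [a2_le E2]]] := IH ij.2.
exists (a1 + a2)%N, (b1 && b2); split; first by rewrite -add1n leq_add.
by move=> t; rewrite vpowSE -/ij E1 E2 -mulnb natrM exprD mulrACA.
Qed.

Lemma vpow_pencil_surj k a :
  (a <= k)%N -> exists x, forall t, vpow (pencil t) k x 0 = t ^+ a.
Proof.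
elim: k a => [|k IH] [|a] // ak.
- by exists ord0 => t; rewrite mxE.
- have [j Ej] := IH 0%N isT.
  exists (cast_ord (esym (expnS d k)) (mxvec_index i0 j)) => t.
  by rewrite vpowS_mxvec Ej pencilE eqxx (negbTE i01) mulr0 addr0 mul1r.
- have [j Ej] := IH a ak.
  exists (cast_ord (esym (expnS d k)) (mxvec_index i1 j)) => t.
  by rewrite vpowS_mxvec Ej pencilE eqxx eq_sym (negbTE i01) mulr1 add0r exprS.
Qed.

Lemma sum_proj_vpow_pencil m k (c : 'rV[C]_m) :
  (forall e, (e <= k + k)%N -> moment c e = 0) ->
  \sum_(j < m) c 0 j *: proj (vpow (pencil (j : nat)%:R) k) = 0.
Proof.
move=> hc; apply/matrixP => x y; rewrite summxE [RHS]mxE.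
have [a1 [b1 [a1k E1]]] := vpow_pencil_monomial x.
have [a2 [b2 [a2k E2]]] := vpow_pencil_monomial y.
transitivity (b1%:R * b2%:R * moment c (a1 + a2)); last by rewrite hc ?mulr0 ?leq_add.
rewrite /moment mulr_sumr; apply: eq_bigr => j _.
rewrite mxE projE E1 E2 rmorphM rmorphXn !rmorph_nat exprD; ring.
Qed.

Lemma moment_eq0_sum_proj_vpow_pencil m n (c : 'rV[C]_m) :
  \sum_(j < m) c 0 j *: proj (vpow (pencil (j : nat)%:R) n) = 0 ->
  forall e, (e <= n + n)%N -> moment c e = 0.
Proof.
move=> hc e en.
have [x Ex] := vpow_pencil_surj (geq_minr e n).
have [y Ey] : exists y, forall t, vpow (pencil t) n y 0 = t ^+ (e - minn e n).
  by apply: vpow_pencil_surj; lia.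
have := congr1 (fun M : 'M[C]_(d ^ n) => M x y) hc; rewrite summxE [RHS]mxE => <-.
apply: eq_bigr => j _.
by rewrite mxE projE Ex Ey rmorphXn rmorph_nat -exprD subnKC ?geq_minl.
Qed.

End Pencil.

Lemma no_prob_superposition d k n alpha beta (phi : 'cV[C]_d) :
  (1 < d)%N -> (0 < n)%N -> `|alpha| ^+ 2 + `|beta| ^+ 2 = 1 ->
  0 < `|beta| < 1 -> unit_vec phi ->
  ~ exists F : {linear 'M[C]_(d ^ k) -> 'M[C]_(d ^ n)},
      prob_qtrans F /\
      forall psi : 'cV[C]_d, unit_vec psi ->
        alpha *: psi + beta *: phi != 0 ->
        exists p : C, 0 < p /\
          F (tpow (proj psi) k) =
          p *: tpow (proj (normalize (alpha *: psi + beta *: phi))) n.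
Proof.
move=> hd n_gt0 hab /andP [b_gt0 b_lt1] hphi [F [_ H]].
have [psi hpsi phi_psi] := exists_orthogonal_unit_vec phi hd.
have psi_phi : dot psi phi = 0 by rewrite dotC phi_psi conjC0.
pose s := beta^* * beta; pose u a := a *: psi + beta *: phi.
have du a1 a2 : dot (u a1) (u a2) = a1^* * a2 + s by exact: dot_orthonormal_comb.
have alpha2 : alpha^* * alpha = 1 - s by rewrite /s -!normCKC -hab addrK.
have uu a : a^* * a = alpha^* * alpha -> unit_vec (u a).
  by rewrite /unit_vec sqnormE du => ->; rewrite alpha2 subrK.
have uNa : unit_vec (u (- alpha)) by apply: uu; rewrite rmorphN mulrNN.
have uN : alpha *: - psi + beta *: phi = u (- alpha) by rewrite scalerN -scaleNr.
have [q1 [q1_gt0 E1]] := H psi hpsi (unit_vec_neq0 (uu _ erefl)).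
have hpsiN : unit_vec (- psi) by rewrite unit_vecN.
have uN0 : alpha *: - psi + beta *: phi != 0 by rewrite uN unit_vec_neq0.
have [q2 [_ E2]] := H _ hpsiN uN0.
rewrite (normalize_id (uu _ erefl)) in E1; rewrite projN uN normalize_id // in E2.
have E : q1 *: proj (vpow (u alpha) n) = q2 *: proj (vpow (u (- alpha)) n).
  by rewrite -!tpow_proj -E1 -E2.
have := overlap_eq1_scaled_proj (unit_vec_vpow n (uu _ erefl)) (unit_vec_vpow n uNa)
  (lt0r_neq0 q1_gt0) E.
rewrite overlap_vpow => ov1.
have ov : overlap (u alpha) (u (- alpha)) = 1 - 4 * s * (1 - s).
  by rewrite /overlap !du rmorphN mulNr mulrN alpha2; ring.
have s_gt0 : 0 < s by rewrite /s -normCKC exprn_gt0.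
have s_lt1 : s < 1 by rewrite /s -normCKC exprn_ilt1 ?ltW.
have : overlap (u alpha) (u (- alpha)) ^+ n < 1.
  rewrite exprn_ilt1 ?overlap_ge0 -?lt0n // ov ltrBlDr ltrDl.
  by rewrite mulr_gt0 ?subr_gt0 // mulr_gt0 // ltr0n.
by rewrite ov1 ltxx.
Qed.

Lemma no_prob_cloning d k n : (1 < d)%N -> (k < n)%N ->
  ~ exists F : {linear 'M[C]_(d ^ k) -> 'M[C]_(d ^ n)},
      prob_qtrans F /\
      forall psi : 'cV[C]_d, unit_vec psi ->
        exists p : C, 0 < p /\ F (tpow (proj psi) k) = p *: tpow (proj psi) n.
Proof.
move=> hd kn [F [_ /proj_vpow_image FP]].
pose i0 : 'I_d := Ordinal (ltnW hd); pose i1 : 'I_d := Ordinal hd.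
have i01 : i0 != i1 by [].
pose m := (k + k).+2.
have [c c0 c_mom] := @exists_moments_eq0 m (k + k) (ltnSn _).
have /fin_all_exists [b hb] := fun j : 'I_m => FP _ (pencil_neq0 i01 (j : nat)%:R).
pose cb : 'rV[C]_m := \row_j (c 0 j * b j).
have : \sum_(j < m) cb 0 j *: proj (vpow (pencil i0 i1 (j : nat)%:R) n) = 0.
  rewrite -[RHS](linear0 F) -(sum_proj_vpow_pencil i01 c_mom) linear_sum.
  by apply: eq_bigr => j _; rewrite linearZ /= (proj2 (hb j)) mxE scalerA.
move/(moment_eq0_sum_proj_vpow_pencil i01) => cb_mom.
have /rowP cb0 : cb = 0 by apply: moments_eq0 => e em; apply: cb_mom; lia.
move/eqP: c0; apply; apply/rowP => j; have := cb0 j; rewrite !mxE => /eqP.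
by rewrite mulf_eq0 (negbTE (proj1 (hb j))) orbF => /eqP.
Qed.

Lemma no_unitary_deletion d k n (hnk : (n < k)%N) (e0 : 'cV[C]_d) :
  (1 < d)%N -> unit_vec e0 ->
  ~ exists U : 'M[C]_(d ^ k),
      U \is unitarymx /\
      forall psi : 'cV[C]_d, unit_vec psi ->
        U *m tpow (proj psi) k *m adjmx U =
        castmx (expn_split d hnk, expn_split d hnk)
               (kron (tpow (proj psi) n) (tpow (proj e0) (k - n))).
Proof.
move=> hd he0 [U [hU H]].
pose w psi := castmx (expn_split d hnk, erefl 1) (kron (vpow psi n) (vpow e0 (k - n))).
have Uw psi : unit_vec psi -> proj (U *m vpow psi k) = proj (w psi).
  by move=> hpsi; rewrite proj_mul -tpow_proj H // proj_castmx -proj_kron -!tpow_proj.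
have [psi [chi [hpsi hchi half]]] := exists_half_overlap hd.
have := eq_overlap_proj (Uw _ hpsi) (Uw _ hchi).
rewrite overlap_unitary // overlap_castmx overlap_kron !overlap_vpow.
rewrite overlap_unit // expr1n mulr1 half !exprVn => /invr_inj /eqP.
rewrite -!natrX eqr_nat eqn_exp2l // => /eqP kn.
by move: (hnk); rewrite kn ltnn.
Qed.

End PureStates.

Theorem theorem3 (C : numClosedFieldType) (d k n : nat)
  (hd : (2 <= d)%N) (hk : (0 < k)%N) (hn : (0 < n)%N)
  (alpha beta : C) (hab : `|alpha| ^+ 2 + `|beta| ^+ 2 = 1) (hb : `|beta| != 1)
  (phi : 'cV[C]_d) (hphi : unit_vec phi) :
  [/\
   (* (i) *)
   (0 < `|beta| < 1 ->
    ~ exists F : {linear 'M[C]_(d ^ k) -> 'M[C]_(d ^ n)},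
        prob_qtrans F /\
        forall psi : 'cV[C]_d, unit_vec psi ->
          alpha *: psi + beta *: phi != 0 ->
          exists p : C, 0 < p /\
            F (tpow (proj psi) k) =
            p *: tpow (proj (normalize (alpha *: psi + beta *: phi))) n),
   (* (ii) *)
   (beta = 0 -> (k < n)%N ->
    ~ exists F : {linear 'M[C]_(d ^ k) -> 'M[C]_(d ^ n)},
        prob_qtrans F /\
        forall psi : 'cV[C]_d, unit_vec psi ->
          exists p : C, 0 < p /\ F (tpow (proj psi) k) = p *: tpow (proj psi) n)
  &
   (* (iii) *)
   (beta = 0 -> forall (hnk : (n < k)%N) (e0 : 'cV[C]_d), unit_vec e0 ->
    ~ exists U : 'M[C]_(d ^ k),
        U \is unitarymx /\
        forall psi : 'cV[C]_d, unit_vec psi ->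
          U *m tpow (proj psi) k *m adjmx U =
          castmx (expn_split d hnk, expn_split d hnk)
                 (kron (tpow (proj psi) n) (tpow (proj e0) (k - n))))].
Proof.
split.
- by move=> hb01; apply: no_prob_superposition.
- by move=> _; apply: no_prob_cloning.
- by move=> _ hnk e0; apply: no_unitary_deletion.
Qed.
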